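(* Let $\mathcal{S}$ be a constrained system with a single-state graph presentation as in the context, with edge set $\mathcal{E}$, label length $s$ and pair counts $\alpha_t$. Then $$\mathcal{GV}(\mathcal{S})\triangleq\{(\delta,R_{\rm GV}(\delta)):\delta\in[0,1]\}=\{(\delta(y),\rho(y)):y\in[0,1]\}\cup\{(\delta,0):\delta\ge\delta_{\max}\},$$ where $$\delta_{\max}=\frac{\sum_{t\ge0}t\alpha_t}{s|\mathcal{E}|^2},\qquad \delta(y)=\frac{\sum_{t\ge0}t\alpha_ty^t}{s\sum_{t\ge0}\alpha_ty^t},\qquad \rho(y)=\frac1s\left(\log\frac{|\mathcal{E}|^2}{\sum_{t\ge0}\alpha_ty^t}+\frac{\sum_{t\ge0}t\alpha_ty^t}{\sum_{t\ge0}\alpha_ty^t}\log y\right).$$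
   Context: $\mathcal{G}$ is a labelled graph with exactly one state, a finite set $\mathcal{E}$ of loops (parallel edges) at that state, and an injective labelling $\mathcal{L}:\mathcal{E}\to\{0,1\}^s$ for some $s\ge1$. $\mathcal{S}$ is the set of words obtained by concatenating labels along paths; for $n$ a multiple of $s$, $\mathcal{S}_n$ is the set of such words of length $n$ (labels of paths with $n/s$ edges). $\log$ is to a fixed base (base 2); limits below are over $n$ multiple of $s$. $\mathrm{Cap}(\mathcal{S})=\limsup\frac1n\log|\mathcal{S}_n|$. For $\mathbf{x}\in\mathcal{S}_n$, $V(\mathbf{x},r)=|\{\mathbf{y}\in\mathcal{S}_n:d_H(\mathbf{x},\mathbf{y})\le r\}|$ ($d_H$ = Hamming distance), $T(n,d)=\sum_{\mathbf{x}\in\mathcal{S}_n}V(\mathbf{x},d-1)$, $\widetilde T(\delta)=\limsup\frac1n\log T(n,\lfloor\delta n\rfloor)$, and $R_{\rm GV}(\delta)=2\,\mathrm{Cap}(\mathcal{S})-\widetilde T(\delta)$. For $0\le t\le s$, $\alpha_t=\#\{(e,f)\in\mathcal{E}^2:d_H(\mathcal{L}(e),\mathcal{L}(f))=t\}$. At $y=0$ the term involving $\log 0$ is interpreted as $0$. *)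

From Stdlib Require Import Reals List Arith ZArith Bool.
From Coquelicot Require Import Coquelicot.
Import ListNotations.
Open Scope R_scope.

(* Single-state graph: edges are 0,...,m-1 (any finite edge set E is in
   bijection with such an initial segment), labelled by L e : list bool
   (a word of length s). *)

(** logarithm to base 2 (Stdlib: ln x = 0 for x <= 0). *)
Definition log2 (x : R) : R := ln x / ln 2.

Fixpoint hamming (x y : list bool) : nat :=
  match x, y with
  | a :: x', b :: y' => ((if Bool.eqb a b then 0 else 1) + hamming x' y')%nat
  | _, _ => 0%nat
  end.

Fixpoint paths (m k : nat) : list (list nat) :=
  match k with
  | O => [nil]
  | S k' => flat_map (fun e => map (cons e) (paths m k')) (seq 0 m)
  end.

(** S_n for n = k*s : the set (duplicate-free list) of labels of paths
    with k edges. *)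
Definition words (m : nat) (L : nat -> list bool) (k : nat) : list (list bool) :=
  nodup (list_eq_dec Bool.bool_dec)
        (map (fun p => concat (map L p)) (paths m k)).

Definition ball_size (m : nat) (L : nat -> list bool) (k : nat)
    (x : list bool) (r : nat) : nat :=
  length (filter (fun y => Nat.leb (hamming x y) r) (words m L k)).

(** T(n, d) = sum_{x in S_n} V(x, d-1), n = k*s.  NB: d - 1 is truncated
    natural subtraction. *)
Definition Tcount (m : nat) (L : nat -> list bool) (k d : nat) : nat :=
  fold_right Nat.add 0%nat
    (map (fun x => ball_size m L k x (d - 1)) (words m L k)).

(** Cap(S) = limsup_n (1/n) log |S_n|, n = k*s ranging over multiples of s *)
Definition Cap (m s : nat) (L : nat -> list bool) : Rbar :=
  LimSup_seq (fun k => / INR (k * s) * log2 (INR (length (words m L k)))).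

Definition nfloor (x : R) : nat := Z.to_nat (Int_part x).

Definition Ttilde (m s : nat) (L : nat -> list bool) (delta : R) : Rbar :=
  LimSup_seq (fun k =>
    / INR (k * s) * log2 (INR (Tcount m L k (nfloor (delta * INR (k * s)))))).

Definition R_GV (m s : nat) (L : nat -> list bool) (delta : R) : Rbar :=
  Rbar_minus (Rbar_mult 2 (Cap m s L)) (Ttilde m s L delta).

Definition alpha (m : nat) (L : nat -> list bool) (t : nat) : nat :=
  length (filter (fun p => Nat.eqb (hamming (L (fst p)) (L (snd p))) t)
                 (list_prod (seq 0 m) (seq 0 m))).

(** sum_{t >= 0} alpha_t y^t  (alpha_t = 0 for t > s) *)
Definition Apoly (m s : nat) (L : nat -> list bool) (y : R) : R :=
  fold_right Rplus 0 (map (fun t => INR (alpha m L t) * y ^ t) (seq 0 (S s))).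

Definition Bpoly (m s : nat) (L : nat -> list bool) (y : R) : R :=
  fold_right Rplus 0
    (map (fun t => INR t * INR (alpha m L t) * y ^ t) (seq 0 (S s))).

Definition delta_max (m s : nat) (L : nat -> list bool) : R :=
  fold_right Rplus 0 (map (fun t => INR t * INR (alpha m L t)) (seq 0 (S s)))
  / (INR s * INR (m * m)).

Definition delta_y (m s : nat) (L : nat -> list bool) (y : R) : R :=
  Bpoly m s L y / (INR s * Apoly m s L y).

(** rho(y); at y = 0, log2 0 = 0 in Stdlib, matching the convention that
    the term involving log 0 is 0. *)
Definition rho_y (m s : nat) (L : nat -> list bool) (y : R) : R :=
  / INR s * (log2 (INR (m * m) / Apoly m s L y)
             + Bpoly m s L y / Apoly m s L y * log2 y).

(* Paths of k edges are labelled by concatenating edge labels, and the Hamming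
   distance of two such labels is the sum of the k edgewise distances.  Hence the
   pair-distance generating function of S_{ks} is A(y)^k with A(y) = sum_t alpha_t y^t,
   and T(n, d) counts the pairs of paths at distance < d.  A Chernoff bound gives
   (1/n) log T <= log A(y) / s - delta log y for every y in (0, 1].  Conversely,
   tilting the pair distribution by y^d makes the distance concentrate around
   k B(y)/A(y) (its variance is at most k s^2), so Chebyshev's inequality matches
   the bound at y whenever s delta exceeds B(y)/A(y).  Since B/A is continuous and
   strictly increasing as soon as there are two edges, approaching y from the left
   gives T~(delta(y)) = log A(y) / s - delta(y) log y, while for delta > delta_max =
   delta(1) the balls contain all |E|^(2k) pairs.  With Cap = log |E| / s this is
   R_GV(delta(y)) = rho(y) on [0, delta_max] and R_GV = 0 beyond; the intermediate
   value theorem shows that delta(y) sweeps all of [0, delta_max]. *)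

From Pilot Require Import Defs.
From Stdlib Require Import Reals List Arith Lia Lra Ranalysis5 ZArith.
From Coquelicot Require Import Coquelicot.
Import ListNotations.
Open Scope R_scope.

Definition lsum {X : Type} (f : X -> R) (l : list X) : R := fold_right Rplus 0 (map f l).

Lemma lsum_nil {X} (f : X -> R) : lsum f [] = 0.
Proof. reflexivity. Qed.

Lemma lsum_cons {X} (f : X -> R) x l : lsum f (x :: l) = f x + lsum f l.
Proof. reflexivity. Qed.

Lemma lsum_app {X} (f : X -> R) l1 l2 : lsum f (l1 ++ l2) = lsum f l1 + lsum f l2.
Proof.
  induction l1 as [|x l1 IH]; simpl app.
  - rewrite lsum_nil; ring.
  - rewrite !lsum_cons, IH; ring.
Qed.

Lemma lsum_map {X Y} (f : Y -> R) (g : X -> Y) l :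
  lsum f (map g l) = lsum (fun x => f (g x)) l.
Proof. unfold lsum; now rewrite map_map. Qed.

Lemma lsum_flat_map {X Y} (f : Y -> R) (g : X -> list Y) l :
  lsum f (flat_map g l) = lsum (fun x => lsum f (g x)) l.
Proof.
  induction l as [|x l IH]; [reflexivity|].
  simpl flat_map. now rewrite lsum_app, IH, lsum_cons.
Qed.

Lemma lsum_list_prod {X Y} (f : X * Y -> R) l1 l2 :
  lsum f (list_prod l1 l2) = lsum (fun x => lsum (fun y => f (x, y)) l2) l1.
Proof.
  induction l1 as [|x l1 IH]; [reflexivity|].
  simpl list_prod. now rewrite lsum_app, lsum_map, IH, lsum_cons.
Qed.

Lemma lsum_ext {X} (f g : X -> R) l :
  (forall x, In x l -> f x = g x) -> lsum f l = lsum g l.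
Proof.
  induction l as [|x l IH]; intros H; [reflexivity|].
  rewrite !lsum_cons, (H x (in_eq x l)), IH; [reflexivity|].
  intros y Hy; apply H, in_cons, Hy.
Qed.

Lemma lsum_le {X} (f g : X -> R) l :
  (forall x, In x l -> f x <= g x) -> lsum f l <= lsum g l.
Proof.
  induction l as [|x l IH]; intros H; [apply Rle_refl|].
  rewrite !lsum_cons. apply Rplus_le_compat; [apply H, in_eq|].
  apply IH; intros y Hy; apply H, in_cons, Hy.
Qed.

Lemma lsum_lt {X} (f g : X -> R) l :
  (forall x, In x l -> f x <= g x) -> (exists x, In x l /\ f x < g x) ->
  lsum f l < lsum g l.
Proof.
  induction l as [|x l IH]; intros Hle [z [Hz Hlt]]; [destruct Hz|].
  rewrite !lsum_cons. destruct Hz as [<- | Hz].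
  - apply Rplus_lt_le_compat; [exact Hlt|].
    apply lsum_le; intros y Hy; apply Hle, in_cons, Hy.
  - apply Rplus_le_lt_compat; [apply Hle, in_eq|].
    apply IH; [intros y Hy; apply Hle, in_cons, Hy | now exists z].
Qed.

Lemma lsum_plus {X} (f g : X -> R) l :
  lsum (fun x => f x + g x) l = lsum f l + lsum g l.
Proof. induction l as [|x l IH]; [cbn; ring|]. rewrite !lsum_cons, IH; ring. Qed.

Lemma lsum_minus {X} (f g : X -> R) l :
  lsum (fun x => f x - g x) l = lsum f l - lsum g l.
Proof. induction l as [|x l IH]; [cbn; ring|]. rewrite !lsum_cons, IH; ring. Qed.

Lemma lsum_scal {X} c (f : X -> R) l : lsum (fun x => c * f x) l = c * lsum f l.
Proof. induction l as [|x l IH]; [cbn; ring|]. rewrite !lsum_cons, IH; ring. Qed.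

Lemma lsum_scal_r {X} c (f : X -> R) l : lsum (fun x => f x * c) l = lsum f l * c.
Proof. induction l as [|x l IH]; [cbn; ring|]. rewrite !lsum_cons, IH; ring. Qed.

Lemma lsum_const {X} c (l : list X) : lsum (fun _ => c) l = c * INR (length l).
Proof.
  induction l as [|x l IH]; [cbn; ring|].
  rewrite lsum_cons, IH; cbn [length]; rewrite S_INR; ring.
Qed.

Lemma lsum_swap {X Y} (f : X -> Y -> R) l1 l2 :
  lsum (fun x => lsum (fun y => f x y) l2) l1 = lsum (fun y => lsum (fun x => f x y) l1) l2.
Proof.
  induction l1 as [|x l1 IH].
  - rewrite lsum_nil, (lsum_ext _ (fun _ => 0)), lsum_const; [ring | reflexivity].
  - rewrite lsum_cons, IH, <- lsum_plus.
    apply lsum_ext; intros y _; now rewrite lsum_cons.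
Qed.

Lemma lsum_mult {X Y} (f : X -> R) (g : Y -> R) l1 l2 :
  lsum f l1 * lsum g l2 = lsum (fun x => lsum (fun y => f x * g y) l2) l1.
Proof.
  rewrite <- lsum_scal_r. apply lsum_ext; intros x _.
  now rewrite <- lsum_scal.
Qed.

Lemma lsum_nonneg {X} (f : X -> R) l : (forall x, In x l -> 0 <= f x) -> 0 <= lsum f l.
Proof.
  intros H. rewrite <- (Rmult_0_l (INR (length l))), <- lsum_const.
  now apply lsum_le.
Qed.

Lemma lsum_ge_elem {X} (f : X -> R) l x :
  (forall z, In z l -> 0 <= f z) -> In x l -> f x <= lsum f l.
Proof.
  induction l as [|y l IH]; intros H Hx; [destruct Hx|].
  rewrite lsum_cons. destruct Hx as [<- | Hx].
  - assert (0 <= lsum f l) by (apply lsum_nonneg; intros z Hz; apply H, in_cons, Hz).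
    lra.
  - assert (0 <= f y) by apply H, in_eq.
    assert (f x <= lsum f l) by (apply IH; [intros z Hz; apply H, in_cons, Hz | exact Hx]).
    lra.
Qed.

Lemma INR_length_filter {X} (g : X -> bool) l :
  INR (length (filter g l)) = lsum (fun x => if g x then 1 else 0) l.
Proof.
  induction l as [|x l IH]; [reflexivity|].
  rewrite lsum_cons, <- IH. simpl filter.
  destruct (g x); cbn [length]; [rewrite S_INR|]; ring.
Qed.

Lemma INR_fold_add {X} (f : X -> nat) l :
  INR (fold_right Nat.add 0%nat (map f l)) = lsum (fun x => INR (f x)) l.
Proof.
  induction l as [|x l IH]; [reflexivity|].
  rewrite lsum_cons, <- IH. simpl. now rewrite plus_INR.
Qed.

Lemma lsum_seq_indicator (F : nat -> R) len start x :
  (start <= x < start + len)%nat ->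
  lsum (fun t => if Nat.eqb x t then F t else 0) (seq start len) = F x.
Proof.
  revert start. induction len as [|len IH]; intros start Hx; [lia|].
  simpl seq. rewrite lsum_cons.
  destruct (Nat.eqb_spec x start) as [-> | Hne].
  - rewrite (lsum_ext _ (fun _ => 0)), lsum_const; [ring|].
    intros t Ht. apply in_seq in Ht. destruct (Nat.eqb_spec start t); [lia | reflexivity].
  - rewrite IH by lia. ring.
Qed.

Lemma lsum_by_value {X} (h : X -> nat) (F : nat -> R) l n :
  (forall x, In x l -> (h x < n)%nat) ->
  lsum (fun t => INR (length (filter (fun x => Nat.eqb (h x) t) l)) * F t) (seq 0 n) =
  lsum (fun x => F (h x)) l.
Proof.
  induction l as [|x l IH]; intros Hh.
  - rewrite (lsum_ext _ (fun _ => 0)), lsum_const; [cbn; ring|].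
    intros t _; cbn; ring.
  - rewrite lsum_cons, <- IH by (intros z Hz; apply Hh, in_cons, Hz).
    rewrite <- (lsum_seq_indicator F n 0 (h x)) by (specialize (Hh x (in_eq x l)); lia).
    rewrite <- lsum_plus. apply lsum_ext; intros t _.
    simpl filter. destruct (Nat.eqb (h x) t); cbn [length]; [rewrite S_INR|]; ring.
Qed.

Lemma hamming_app x1 x2 y1 y2 : length x1 = length y1 ->
  hamming (x1 ++ x2) (y1 ++ y2) = (hamming x1 y1 + hamming x2 y2)%nat.
Proof.
  revert y1; induction x1 as [|a x1 IH]; intros [|b y1] H; cbn in *; try lia.
  rewrite IH by lia. lia.
Qed.

Lemma hamming_le x y : (hamming x y <= length x)%nat.
Proof.
  revert y; induction x as [|a x IH]; intros [|b y]; cbn; try lia.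
  specialize (IH y). destruct (Bool.eqb a b); lia.
Qed.

Lemma hamming_refl x : hamming x x = 0%nat.
Proof. induction x as [|a x IH]; cbn; [reflexivity|]. now rewrite Bool.eqb_reflx. Qed.

Lemma hamming_eq0 x y : length x = length y -> hamming x y = 0%nat -> x = y.
Proof.
  revert y; induction x as [|a x IH]; intros [|b y] Hl H; cbn in *; try lia; auto.
  destruct (Bool.eqb a b) eqn:E; cbn in H; [|lia].
  apply Bool.eqb_prop in E as ->. f_equal. apply IH; lia.
Qed.

Definition pair_dists {X} (lab : X -> list bool) (l : list X) : list nat :=
  map (fun p => hamming (lab (fst p)) (lab (snd p))) (list_prod l l).

Lemma lsum_pair_dists {X} (lab : X -> list bool) l F :
  lsum F (pair_dists lab l) = lsum (fun x => lsum (fun y => F (hamming (lab x) (lab y))) l) l.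
Proof. unfold pair_dists. now rewrite lsum_map, lsum_list_prod. Qed.

Lemma in_paths m k p :
  In p (paths m k) -> length p = k /\ (forall e, In e p -> (e < m)%nat).
Proof.
  revert p; induction k as [|k IH]; intros p Hp; cbn in Hp.
  - destruct Hp as [<- | []]. split; [reflexivity | intros e []].
  - apply in_flat_map in Hp as [e [He Hp]]. apply in_map_iff in Hp as [q [<- Hq]].
    apply IH in Hq as [Hlen Hq]. apply in_seq in He.
    split; [cbn; lia|]. intros e' [<- | He']; [lia | auto].
Qed.

Lemma NoDup_paths m k : NoDup (paths m k).
Proof.
  induction k as [|k IH]; cbn; [repeat constructor; intros []|].
  induction (seq_NoDup m 0) as [|e es Hes _ IHes]; cbn; [constructor|].
  apply NoDup_app; [|exact IHes|].
  - apply NoDup_map_NoDup_ForallPairs; [|exact IH]. intros p q _ _ E. now injection E.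
  - intros p Hp Hp'. apply in_map_iff in Hp as [q [<- _]].
    apply in_flat_map in Hp' as [f [Hf Hq]]. apply in_map_iff in Hq as [q' [E _]].
    injection E as ->. contradiction.
Qed.

Lemma length_paths m k : length (paths m k) = (m ^ k)%nat.
Proof.
  induction k as [|k IH]; [reflexivity|]. cbn [paths].
  rewrite (flat_map_constant_length (c := (m ^ k)%nat)), length_seq; [reflexivity|].
  intros e _. now rewrite length_map.
Qed.

Lemma pow_le_pow_of_le_1 y a b : 0 <= y <= 1 -> (a <= b)%nat -> y ^ b <= y ^ a.
Proof.
  intros Hy Hab. replace b with (a + (b - a))%nat by lia. rewrite pow_add.
  assert (0 <= y ^ a) by (apply pow_le; lra).
  assert (y ^ (b - a) <= 1) by (rewrite <- (pow1 (b - a)); apply pow_incr; lra).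
  nra.
Qed.

Lemma pow_lt_pow_l a b n : 0 <= a < b -> (1 <= n)%nat -> a ^ n < b ^ n.
Proof.
  intros Hab Hn. induction n as [|n IH]; [lia|].
  destruct (Nat.eq_dec n 0) as [-> | Hn0]; [cbn; lra|].
  assert (a ^ n < b ^ n) by (apply IH; lia).
  assert (0 <= a ^ n) by (apply pow_le; lra).
  cbn [pow]. nra.
Qed.

Lemma ln2_pos : 0 < ln 2.
Proof. rewrite <- ln_1. apply ln_increasing; lra. Qed.

Lemma log2_of_nonpos x : x <= 0 -> log2 x = 0.
Proof. intros H. unfold log2, ln. destruct (Rlt_dec 0 x); [exfalso; lra | unfold Rdiv; ring]. Qed.

Lemma log2_1 : log2 1 = 0.
Proof. unfold log2. rewrite ln_1. unfold Rdiv; ring. Qed.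

Lemma log2_2 : log2 2 = 1.
Proof. unfold log2. pose proof ln2_pos. field. lra. Qed.

Lemma log2_mult x y : 0 < x -> 0 < y -> log2 (x * y) = log2 x + log2 y.
Proof. intros Hx Hy. unfold log2. rewrite ln_mult by assumption. unfold Rdiv; ring. Qed.

Lemma log2_div x y : 0 < x -> 0 < y -> log2 (x / y) = log2 x - log2 y.
Proof. intros Hx Hy. unfold log2. rewrite ln_div by assumption. unfold Rdiv; ring. Qed.

Lemma log2_pow x n : 0 < x -> log2 (x ^ n) = INR n * log2 x.
Proof. intros Hx. unfold log2. rewrite ln_pow by assumption. unfold Rdiv; ring. Qed.

Lemma log2_exp_mult_ln a y : log2 (exp (a * ln y)) = a * log2 y.
Proof. unfold log2. rewrite ln_exp. unfold Rdiv; ring. Qed.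

Lemma log2_le x y : 0 < x -> x <= y -> log2 x <= log2 y.
Proof.
  intros Hx Hxy. unfold log2, Rdiv. apply Rmult_le_compat_r.
  - left; apply Rinv_0_lt_compat, ln2_pos.
  - now apply ln_le.
Qed.

Lemma log2_nonneg x : 1 <= x -> 0 <= log2 x.
Proof. intros Hx. rewrite <- log2_1. apply log2_le; lra. Qed.

Lemma log2_nonpos x : 0 < x <= 1 -> log2 x <= 0.
Proof. intros Hx. rewrite <- log2_1. apply log2_le; lra. Qed.

Lemma nfloor_bounds x : 0 <= x -> INR (Defs.nfloor x) <= x < INR (Defs.nfloor x) + 1.
Proof.
  intros Hx. unfold Defs.nfloor. destruct (base_Int_part x) as [H1 H2].
  assert (Hz : (0 <= Int_part x)%Z).
  { assert (H3 : IZR (-1) < IZR (Int_part x)) by (cbn; lra).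
    apply lt_IZR in H3. lia. }
  rewrite INR_IZR_INZ, Z2Nat.id by assumption. lra.
Qed.

(* [Tcount] uses the ball radius [d - 1], with truncated subtraction. *)
Lemma nfloor_pred_bounds x :
  0 <= x -> INR (Defs.nfloor x - 1) <= x /\ x - 2 <= INR (Defs.nfloor x - 1).
Proof.
  intros Hx. destruct (nfloor_bounds x Hx) as [H1 H2].
  destruct (Defs.nfloor x) as [|f]; [cbn in *; lra|].
  replace (S f - 1)%nat with f by lia. rewrite S_INR in *. lra.
Qed.

Lemma nfloor_0 : Defs.nfloor 0 = 0%nat.
Proof.
  destruct (nfloor_bounds 0 (Rle_refl 0)) as [H _].
  destruct (Defs.nfloor 0) as [|f]; [reflexivity|].
  rewrite S_INR in H. pose proof (pos_INR f). lra.
Qed.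

Lemma eventually_ge_INR c : exists K, forall k, (K <= k)%nat -> c <= INR k.
Proof.
  destruct (Rle_lt_dec c 0) as [Hc | Hc].
  - exists 0%nat. intros k _. pose proof (pos_INR k). lra.
  - destruct (archimed c) as [Hup _].
    assert (Hz : (0 <= up c)%Z) by (apply le_IZR; lra).
    exists (Z.to_nat (up c)). intros k Hk. apply le_INR in Hk.
    rewrite INR_IZR_INZ, Z2Nat.id in Hk by assumption. lra.
Qed.

Lemma LimSup_seq_eventually_const (u : nat -> R) c :
  (forall k, (1 <= k)%nat -> u k = c) -> LimSup_seq u = Finite c.
Proof.
  intros H. apply is_LimSup_seq_unique, (is_LimSup_seq_ext_loc (fun _ => c)).
  - exists 1%nat. intros k Hk. symmetry. now apply H.
  - apply is_LimSup_seq_const.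
Qed.

Lemma continuous_lsum {X} (f : X -> R -> R) l x :
  (forall t, In t l -> continuous (f t) x) -> continuous (fun y => lsum (fun t => f t y) l) x.
Proof.
  induction l as [|t l IH]; intros H; [apply continuous_const|].
  apply (continuous_plus (f t) (fun y => lsum (fun t => f t y) l)).
  - apply H, in_eq.
  - apply IH. intros t' Ht'. apply H, in_cons, Ht'.
Qed.

Lemma continuous_approx_left f x eta : continuous f x -> 0 < x -> 0 < eta ->
  exists y, 0 < y < x /\ Rabs (f y - f x) < eta.
Proof.
  intros Hc Hx He. apply continuity_pt_filterlim in Hc.
  destruct (Hc eta He) as [a [Ha H]].
  assert (0 < Rmin a x) by (apply Rmin_glb_lt; lra).
  pose proof (Rmin_l a x). pose proof (Rmin_r a x).
  exists (x - Rmin a x / 2). split; [lra|]. apply H.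
  split; [split; [exact I | lra]|].
  cbn. unfold R_dist. rewrite Rabs_left; lra.
Qed.

Lemma dist_pair_nonpos y1 y2 a b : 0 <= y1 <= y2 ->
  (INR a - INR b) * (y1 ^ a * y2 ^ b - y2 ^ a * y1 ^ b) <= 0.
Proof.
  intros Hy.
  assert (Hsign : forall a b, (a <= b)%nat -> 0 <= y1 ^ a * y2 ^ b - y2 ^ a * y1 ^ b).
  { intros a' b' Hab. replace b' with (a' + (b' - a'))%nat by lia. rewrite !pow_add.
    assert (0 <= y1 ^ a' * y2 ^ a') by (apply Rmult_le_pos; apply pow_le; lra).
    assert (y1 ^ (b' - a') <= y2 ^ (b' - a')) by (apply pow_incr; lra).
    nra. }
  destruct (Nat.le_ge_cases a b) as [H | H];
    pose proof (le_INR _ _ H); pose proof (Hsign _ _ H); nra.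
Qed.

(* Symmetrising the double sum turns the cross difference into a sum of the
   terms of [dist_pair_nonpos]; the pair of distances [0] and [d >= 1] makes it strict. *)
Lemma weighted_mean_lt (ds : list nat) y1 y2 :
  0 <= y1 < y2 -> In 0%nat ds -> (exists d, In d ds /\ (1 <= d)%nat) ->
  lsum (fun d => INR d * y1 ^ d) ds * lsum (fun d => y2 ^ d) ds <
  lsum (fun d => INR d * y2 ^ d) ds * lsum (fun d => y1 ^ d) ds.
Proof.
  intros Hy H0 [d [Hd Hd1]].
  set (G a b := INR a * (y1 ^ a * y2 ^ b - y2 ^ a * y1 ^ b)).
  assert (Hdiff : lsum (fun d => INR d * y1 ^ d) ds * lsum (fun d => y2 ^ d) ds -
                  lsum (fun d => INR d * y2 ^ d) ds * lsum (fun d => y1 ^ d) ds =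
                  lsum (fun a => lsum (fun b => G a b) ds) ds).
  { rewrite !lsum_mult, <- lsum_minus. apply lsum_ext; intros a _.
    rewrite <- lsum_minus. apply lsum_ext; intros b _. unfold G; ring. }
  assert (Hsym : lsum (fun a => lsum (fun b => G a b + G b a) ds) ds =
                 2 * lsum (fun a => lsum (fun b => G a b) ds) ds).
  { rewrite (lsum_ext _ (fun a => lsum (fun b => G a b) ds + lsum (fun b => G b a) ds))
      by (intros; apply lsum_plus).
    rewrite lsum_plus, <- (lsum_swap (fun a b => G b a)). ring. }
  assert (Hneg : lsum (fun a => lsum (fun b => G a b + G b a) ds) ds <
                 lsum (fun a => lsum (fun b => 0) ds) ds).
  { assert (Hle : forall a b, G a b + G b a <= 0).
    { intros a b. pose proof (dist_pair_nonpos y1 y2 a b ltac:(lra)). unfold G. nra. }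
    apply lsum_lt; [intros a _; apply lsum_le; intros b _; apply Hle|].
    exists 0%nat. split; [exact H0|].
    apply lsum_lt; [intros b _; apply Hle|].
    exists d. split; [exact Hd|]. unfold G. cbn [INR pow].
    pose proof (pow_lt_pow_l y1 y2 d ltac:(lra) Hd1).
    pose proof (le_INR 1 d Hd1). cbn [INR] in *. nra. }
  assert (Hzero : lsum (fun _ : nat => lsum (fun _ : nat => 0) ds) ds = 0)
    by (rewrite !lsum_const; ring).
  lra.
Qed.

Lemma app_inj_length {A} (a b c d : list A) :
  length a = length c -> a ++ b = c ++ d -> a = c /\ b = d.
Proof.
  revert c; induction a as [|x a IH]; intros [|z c] Hl E; cbn in *; try lia; auto.
  injection E as -> E. destruct (IH c) as [-> ->]; auto.
Qed.

Section SingleStateGraph.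

Variables (m s : nat) (L : nat -> list bool).
Hypothesis hlen : forall e, (e < m)%nat -> length (L e) = s.
Hypothesis hinj : forall e f, (e < m)%nat -> (f < m)%nat -> L e = L f -> e = f.
Hypothesis hs : (1 <= s)%nat.

Definition path_label (p : list nat) : list bool := concat (map L p).

Lemma path_label_inj k p q :
  In p (paths m k) -> In q (paths m k) -> path_label p = path_label q -> p = q.
Proof.
  intros Hp Hq. apply in_paths in Hp as [Hpk Hp], Hq as [Hqk Hq].
  rewrite <- Hqk in Hpk. clear k Hqk. revert q Hpk Hq. unfold path_label.
  induction p as [|e p IH]; intros [|f q] Hpq Hq E; cbn in Hpq; try lia; [reflexivity|].
  cbn [map concat] in E.
  assert (He : (e < m)%nat) by apply Hp, in_eq.
  assert (Hf : (f < m)%nat) by apply Hq, in_eq.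
  assert (Hl : length (L e) = length (L f)) by now rewrite !hlen.
  apply (app_inj_length _ _ _ _ Hl) in E as [Eef Epq].
  f_equal; [now apply hinj|].
  apply IH; [intros; apply Hp, in_cons; auto | lia | intros; apply Hq, in_cons; auto | exact Epq].
Qed.

Lemma words_eq k : words m L k = map path_label (paths m k).
Proof.
  apply nodup_fixed_point, NoDup_map_NoDup_ForallPairs; [|apply NoDup_paths].
  intros p q Hp Hq. now apply (path_label_inj k).
Qed.

Lemma length_words k : INR (length (words m L k)) = INR m ^ k.
Proof. now rewrite words_eq, length_map, length_paths, pow_INR. Qed.

(* [alpha m L t] is the multiplicity of [t] in [edge_dists]. *)
Definition edge_dists : list nat := pair_dists L (seq 0 m).
Definition path_dists (k : nat) : list nat := pair_dists path_label (paths m k).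

Lemma lsum_path_dists_0 F : lsum F (path_dists 0) = F 0%nat.
Proof. cbn. ring. Qed.

Lemma lsum_path_dists_S k F :
  lsum F (path_dists (S k)) =
  lsum (fun t => lsum (fun d => F (t + d)%nat) (path_dists k)) edge_dists.
Proof.
  unfold path_dists, edge_dists. rewrite !lsum_pair_dists. cbn [paths].
  rewrite lsum_flat_map. apply lsum_ext; intros e He. rewrite lsum_map.
  rewrite (lsum_ext _ (fun p => lsum (fun f => lsum (fun q =>
      F (hamming (L e) (L f) + hamming (path_label p) (path_label q))%nat)
      (paths m k)) (seq 0 m))).
  - rewrite lsum_swap. apply lsum_ext; intros f _. now rewrite lsum_pair_dists.
  - intros p _. rewrite lsum_flat_map. apply lsum_ext; intros f Hf. rewrite lsum_map.
    apply lsum_ext; intros q _. apply in_seq in He, Hf.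
    unfold path_label; cbn [map concat]. rewrite hamming_app; [reflexivity|].
    rewrite !hlen by lia. reflexivity.
Qed.

Definition Apair (y : R) : R := lsum (pow y) edge_dists.
Definition Bpair (y : R) : R := lsum (fun t => INR t * y ^ t) edge_dists.
Definition Cpair (y : R) : R := lsum (fun t => INR t ^ 2 * y ^ t) edge_dists.

Lemma lsum_path_dists_pow y k : lsum (pow y) (path_dists k) = Apair y ^ k.
Proof.
  induction k as [|k IH]; [now rewrite lsum_path_dists_0|].
  rewrite lsum_path_dists_S, (lsum_ext _ (fun t => y ^ t * Apair y ^ k)).
  - rewrite lsum_scal_r. cbn [pow]. reflexivity.
  - intros t _. rewrite <- IH, <- lsum_scal. apply lsum_ext; intros d _. apply pow_add.
Qed.

Lemma lsum_path_dists_mean y k :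
  lsum (fun d => INR d * y ^ d) (path_dists k) * Apair y = INR k * Bpair y * Apair y ^ k.
Proof.
  induction k as [|k IH]; [rewrite lsum_path_dists_0; cbn; ring|].
  rewrite lsum_path_dists_S, (lsum_ext _ (fun t =>
      INR t * y ^ t * Apair y ^ k + y ^ t * lsum (fun d => INR d * y ^ d) (path_dists k))).
  - rewrite lsum_plus, !lsum_scal_r. fold (Apair y) (Bpair y).
    transitivity (Bpair y * Apair y ^ k * Apair y
                  + Apair y * (lsum (fun d => INR d * y ^ d) (path_dists k) * Apair y));
      [ring|].
    rewrite IH, S_INR. cbn [pow]. ring.
  - intros t _. rewrite <- lsum_path_dists_pow, <- !lsum_scal, <- lsum_plus.
    apply lsum_ext; intros d _. rewrite plus_INR, pow_add. ring.
Qed.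

Lemma lsum_path_dists_second_moment y k :
  lsum (fun d => INR d ^ 2 * y ^ d) (path_dists k) * Apair y ^ 2 =
  (INR k * Cpair y * Apair y + INR k * (INR k - 1) * Bpair y ^ 2) * Apair y ^ k.
Proof.
  induction k as [|k IH]; [rewrite lsum_path_dists_0; cbn; ring|].
  rewrite lsum_path_dists_S, (lsum_ext _ (fun t =>
      INR t ^ 2 * y ^ t * Apair y ^ k
      + INR t * y ^ t * (2 * lsum (fun d => INR d * y ^ d) (path_dists k))
      + y ^ t * lsum (fun d => INR d ^ 2 * y ^ d) (path_dists k))).
  - rewrite !lsum_plus, !lsum_scal_r. fold (Apair y) (Bpair y) (Cpair y).
    transitivity (Cpair y * Apair y ^ k * Apair y ^ 2
      + 2 * Bpair y * Apair y * (lsum (fun d => INR d * y ^ d) (path_dists k) * Apair y)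
      + Apair y * (lsum (fun d => INR d ^ 2 * y ^ d) (path_dists k) * Apair y ^ 2)); [ring|].
    rewrite lsum_path_dists_mean, IH, S_INR. cbn [pow]. ring.
  - intros t _. rewrite <- lsum_path_dists_pow, <- (lsum_scal 2), <- !lsum_scal, <- !lsum_plus.
    apply lsum_ext; intros d _. rewrite plus_INR, pow_add. ring.
Qed.

Lemma lsum_alpha F :
  lsum (fun t => INR (alpha m L t) * F t) (seq 0 (S s)) = lsum F edge_dists.
Proof.
  unfold alpha, edge_dists, pair_dists. rewrite lsum_map.
  apply (lsum_by_value (fun p => hamming (L (fst p)) (L (snd p)))).
  intros [e f] Hef. apply in_prod_iff in Hef as [He _]. apply in_seq in He.
  pose proof (hamming_le (L e) (L f)). rewrite hlen in * by lia. cbn. lia.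
Qed.

Lemma Apoly_eq y : Apoly m s L y = Apair y.
Proof. exact (lsum_alpha (pow y)). Qed.

Lemma Bpoly_eq y : Bpoly m s L y = Bpair y.
Proof.
  unfold Bpoly, Bpair. rewrite <- lsum_alpha.
  apply (lsum_ext (fun t => INR t * INR (alpha m L t) * y ^ t)). intros; ring.
Qed.

Lemma Tcount_eq k D :
  INR (Tcount m L k D) = lsum (fun d => if Nat.leb d (D - 1) then 1 else 0) (path_dists k).
Proof.
  unfold Tcount, ball_size. rewrite words_eq, INR_fold_add, lsum_map.
  unfold path_dists. rewrite lsum_pair_dists. apply lsum_ext; intros p _.
  now rewrite INR_length_filter, lsum_map.
Qed.

Lemma Apair_1 : Apair 1 = INR m * INR m.
Proof.
  unfold Apair. rewrite (lsum_ext _ (fun _ => 1)) by (intros; apply pow1).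
  unfold edge_dists, pair_dists.
  rewrite lsum_const, length_map, length_prod, length_seq, mult_INR. ring.
Qed.

Lemma edge_dists_le d : In d edge_dists -> (d <= s)%nat.
Proof.
  unfold edge_dists, pair_dists. intros Hd.
  apply in_map_iff in Hd as [[e f] [<- Hef]]. apply in_prod_iff in Hef as [He _].
  apply in_seq in He. rewrite <- (hlen e) by lia. apply hamming_le.
Qed.

Lemma Apair_ge y : 0 <= y -> INR m <= Apair y.
Proof.
  intros Hy. unfold Apair, edge_dists. rewrite lsum_pair_dists.
  rewrite <- (length_seq m 0) at 1. rewrite <- (Rmult_1_l (INR _)), <- lsum_const.
  apply lsum_le; intros e He.
  apply Rle_trans with (y ^ hamming (L e) (L e)); [rewrite hamming_refl; cbn; lra|].
  apply (lsum_ge_elem (fun f => y ^ hamming (L e) (L f))); [|exact He].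
  intros; apply pow_le, Hy.
Qed.

Lemma Apair_ge_1 y : (1 <= m)%nat -> 0 <= y -> 1 <= Apair y.
Proof. intros Hm Hy. apply (le_INR 1) in Hm. pose proof (Apair_ge y Hy). cbn in Hm. lra. Qed.

Lemma Bpair_nonneg y : 0 <= y -> 0 <= Bpair y.
Proof.
  intros Hy. apply lsum_nonneg; intros t _.
  apply Rmult_le_pos; [apply pos_INR | apply pow_le, Hy].
Qed.

Lemma Bpair_le y : 0 <= y -> Bpair y <= INR s * Apair y.
Proof.
  intros Hy. unfold Bpair, Apair. rewrite <- lsum_scal.
  apply lsum_le; intros t Ht. apply Rmult_le_compat_r; [apply pow_le, Hy|].
  now apply le_INR, edge_dists_le.
Qed.

Lemma Cpair_le y : 0 <= y -> Cpair y <= INR s ^ 2 * Apair y.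
Proof.
  intros Hy. unfold Cpair, Apair. rewrite <- lsum_scal.
  apply lsum_le; intros t Ht. apply Rmult_le_compat_r; [apply pow_le, Hy|].
  apply pow_incr. split; [apply pos_INR | now apply le_INR, edge_dists_le].
Qed.

Definition tilted_mean (y : R) : R := Bpair y / Apair y.

Lemma tilted_mean_bounds y : 0 <= y -> 0 <= tilted_mean y <= INR s.
Proof.
  intros Hy. unfold tilted_mean.
  pose proof (Bpair_nonneg y Hy). pose proof (Bpair_le y Hy).
  assert (HA : 0 <= Apair y) by (apply lsum_nonneg; intros; apply pow_le, Hy).
  destruct (Req_dec (Apair y) 0) as [HA0 | HA0].
  - rewrite HA0. unfold Rdiv. rewrite Rinv_0, Rmult_0_r. split; [lra | apply pos_INR].
  - split; [apply Rdiv_le_0_compat; lra|]. apply Rle_div_l; lra.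
Qed.

Lemma tilted_variance_le y k : 0 <= y -> 0 < Apair y ->
  lsum (fun d => y ^ d * (INR d - INR k * tilted_mean y) ^ 2) (path_dists k) <=
  INR k * INR s ^ 2 * Apair y ^ k.
Proof.
  intros Hy HA. unfold tilted_mean.
  set (X1 := lsum (fun d => INR d * y ^ d) (path_dists k)).
  set (X2 := lsum (fun d => INR d ^ 2 * y ^ d) (path_dists k)).
  rewrite (lsum_ext _ (fun d => INR d ^ 2 * y ^ d + (-2 * INR k * (Bpair y / Apair y)) *
      (INR d * y ^ d) + (INR k * (Bpair y / Apair y)) ^ 2 * y ^ d)) by (intros; ring).
  rewrite !lsum_plus, !lsum_scal. fold X1 X2. rewrite lsum_path_dists_pow.
  apply (Rmult_le_reg_r (Apair y ^ 2)); [now apply pow_lt|].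
  replace ((X2 + -2 * INR k * (Bpair y / Apair y) * X1 +
            (INR k * (Bpair y / Apair y)) ^ 2 * Apair y ^ k) * Apair y ^ 2)
    with (X2 * Apair y ^ 2 - 2 * INR k * Bpair y * (X1 * Apair y) +
          INR k ^ 2 * Bpair y ^ 2 * Apair y ^ k) by (field; lra).
  unfold X1, X2. rewrite lsum_path_dists_second_moment, lsum_path_dists_mean.
  assert (HkP : 0 <= INR k * Apair y ^ k) by (apply Rmult_le_pos; [apply pos_INR | apply pow_le; lra]).
  assert (HC : Cpair y <= INR s ^ 2 * Apair y) by now apply Cpair_le.
  assert (INR k * Apair y ^ k * (Cpair y * Apair y) <=
          INR k * Apair y ^ k * (INR s ^ 2 * Apair y * Apair y))
    by (apply Rmult_le_compat_l; [exact HkP | apply Rmult_le_compat_r; lra]).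
  assert (0 <= INR k * Apair y ^ k * Bpair y ^ 2) by (apply Rmult_le_pos; [exact HkP | apply pow2_ge_0]).
  lra.
Qed.

Lemma ball_pairs_le_chernoff y k D : 0 < y <= 1 ->
  lsum (fun d => if Nat.leb d D then 1 else 0) (path_dists k) <= Apair y ^ k / y ^ D.
Proof.
  intros Hy. rewrite <- lsum_path_dists_pow. unfold Rdiv. rewrite <- lsum_scal_r.
  apply lsum_le; intros d _.
  assert (HyD : 0 < / y ^ D) by (apply Rinv_0_lt_compat, pow_lt; lra).
  destruct (Nat.leb_spec d D) as [HdD | HdD].
  - rewrite <- (Rinv_r (y ^ D)) by (apply pow_nonzero; lra).
    apply Rmult_le_compat_r; [lra|]. apply pow_le_pow_of_le_1; [lra | exact HdD].
  - apply Rmult_le_pos; [apply pow_le; lra | lra].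
Qed.

Lemma chebyshev_pointwise y k eps mu D d :
  0 < y <= 1 -> 0 < eps -> (1 <= k)%nat -> INR k * (mu + eps) <= INR D ->
  y ^ d - / (eps * INR k) ^ 2 * (y ^ d * (INR d - INR k * mu) ^ 2) <=
  (if Nat.leb d D then 1 else 0) * exp (INR k * (mu - eps) * ln y).
Proof.
  intros Hy Heps Hk HD.
  assert (Hkpos : 0 < INR k) by (apply lt_0_INR; lia).
  assert (Hw : 0 < / (eps * INR k) ^ 2) by (apply Rinv_0_lt_compat, pow_lt; nra).
  assert (Hyd : 0 < y ^ d) by (apply pow_lt; lra).
  pose proof (exp_pos (INR k * (mu - eps) * ln y)) as HE.
  destruct (Rlt_le_dec (Rabs (INR d - INR k * mu)) (eps * INR k)) as [Hnear | Hfar].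
  - apply Rabs_def2 in Hnear as [Hup Hlow].
    assert (HdD : (d <= D)%nat) by (apply INR_le; lra).
    apply Nat.leb_le in HdD as ->.
    assert (HyE : y ^ d <= exp (INR k * (mu - eps) * ln y)).
    { rewrite <- (exp_ln (y ^ d)), ln_pow by lra.
      assert (Hlny : ln y <= 0) by (rewrite <- ln_1; apply ln_le; lra).
      assert (Hexp : INR d * ln y <= INR k * (mu - eps) * ln y) by nra.
      destruct Hexp as [Hlt | Heq]; [left; now apply exp_increasing | now rewrite Heq]. }
    assert (0 <= / (eps * INR k) ^ 2 * (y ^ d * (INR d - INR k * mu) ^ 2))
      by (apply Rmult_le_pos; [lra | apply Rmult_le_pos; [lra | apply pow2_ge_0]]).
    lra.
  - assert (Hsq : (eps * INR k) ^ 2 <= (INR d - INR k * mu) ^ 2).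
    { rewrite <- (pow2_abs (INR d - INR k * mu)). apply pow_incr. split; [nra | exact Hfar]. }
    assert (1 <= / (eps * INR k) ^ 2 * (INR d - INR k * mu) ^ 2).
    { rewrite <- (Rinv_l ((eps * INR k) ^ 2)) by (apply pow_nonzero; nra).
      apply Rmult_le_compat_l; [lra | exact Hsq]. }
    assert (0 <= (if Nat.leb d D then 1 else 0) * exp (INR k * (mu - eps) * ln y))
      by (destruct (Nat.leb d D); lra).
    nra.
Qed.

(* Chebyshev's inequality for the pair distribution tilted by [y ^ d]: the pairs
   whose distance is within [eps k] of the tilted mean [k * tilted_mean y] carry
   all but a fraction [s^2 / (eps^2 k)] of the tilted mass. *)
Lemma ball_pairs_ge_second_moment y k eps D :
  0 < y <= 1 -> 0 < Apair y -> 0 < eps -> (1 <= k)%nat ->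
  INR k * (tilted_mean y + eps) <= INR D ->
  Apair y ^ k * (1 - INR s ^ 2 / (eps ^ 2 * INR k)) <=
  lsum (fun d => if Nat.leb d D then 1 else 0) (path_dists k) *
  exp (INR k * (tilted_mean y - eps) * ln y).
Proof.
  intros Hy HA Heps Hk HD.
  assert (Hkpos : 0 < INR k) by (apply lt_0_INR; lia).
  pose proof (lsum_le _ _ (path_dists k)
    (fun d _ => chebyshev_pointwise y k eps (tilted_mean y) D d Hy Heps Hk HD)) as Hsum.
  rewrite lsum_minus, lsum_scal, lsum_scal_r, lsum_path_dists_pow in Hsum.
  pose proof (tilted_variance_le y k ltac:(lra) HA) as Hvar.
  assert (/ (eps * INR k) ^ 2 *
            lsum (fun d => y ^ d * (INR d - INR k * tilted_mean y) ^ 2) (path_dists k) <=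
          Apair y ^ k * (INR s ^ 2 / (eps ^ 2 * INR k))).
  { apply Rle_trans with (/ (eps * INR k) ^ 2 * (INR k * INR s ^ 2 * Apair y ^ k)).
    - apply Rmult_le_compat_l; [left; apply Rinv_0_lt_compat, pow_lt; nra | exact Hvar].
    - right. field. lra. }
  lra.
Qed.

Definition Tseq (delta : R) (k : nat) : R :=
  / INR (k * s) * log2 (INR (Tcount m L k (Defs.nfloor (delta * INR (k * s))))).

Definition chernoff_exponent (y delta : R) : R := log2 (Apair y) / INR s - delta * log2 y.

Lemma Tseq_le_chernoff delta y k : (1 <= m)%nat -> (1 <= k)%nat -> 0 <= delta -> 0 < y <= 1 ->
  Tseq delta k <= chernoff_exponent y delta.
Proof.
  intros Hm Hk Hd Hy. unfold Tseq, chernoff_exponent.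
  assert (Hs : 1 <= INR s) by now apply (le_INR 1).
  assert (Hkr : 1 <= INR k) by now apply (le_INR 1).
  rewrite mult_INR, Tcount_eq. set (n := INR k * INR s).
  assert (Hn : 0 < n) by (unfold n; nra).
  assert (Hdn : 0 <= delta * n) by (apply Rmult_le_pos; lra).
  destruct (nfloor_pred_bounds (delta * n) Hdn) as [HD _].
  set (D := (Defs.nfloor (delta * n) - 1)%nat) in *.
  set (T := lsum _ (path_dists k)).
  assert (HA : 1 <= Apair y) by (apply Apair_ge_1; [exact Hm | lra]).
  pose proof (log2_nonneg _ HA) as HlogA.
  pose proof (log2_nonpos y Hy) as Hlogy.
  assert (Hlog : log2 T <= INR k * log2 (Apair y) - delta * n * log2 y).
  { destruct (Rle_lt_dec T 0) as [HT | HT]; [rewrite log2_of_nonpos by exact HT; nra|].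
    apply Rle_trans with (log2 (Apair y ^ k / y ^ D)).
    - apply log2_le; [exact HT | now apply ball_pairs_le_chernoff].
    - rewrite log2_div, !log2_pow by (try apply pow_lt; lra). nra. }
  apply Rle_trans with (/ n * (INR k * log2 (Apair y) - delta * n * log2 y)).
  - apply Rmult_le_compat_l; [left; now apply Rinv_0_lt_compat | exact Hlog].
  - right. unfold n. field. lra.
Qed.

Lemma log2_ball_pairs_ge y k eps D :
  (1 <= m)%nat -> 0 < y <= 1 -> 0 < eps -> (1 <= k)%nat ->
  INR s ^ 2 / (eps ^ 2 * INR k) <= / 2 -> INR k * (tilted_mean y + eps) <= INR D ->
  INR k * log2 (Apair y) - 1 - INR k * (tilted_mean y - eps) * log2 y <=
  log2 (lsum (fun d => if Nat.leb d D then 1 else 0) (path_dists k)).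
Proof.
  intros Hm Hy Heps Hk Hsmall HD.
  assert (HA : 0 < Apair y) by (pose proof (Apair_ge_1 y Hm ltac:(lra)); lra).
  pose proof (ball_pairs_ge_second_moment y k eps D Hy HA Heps Hk HD) as Hsm.
  set (T := lsum _ (path_dists k)) in *.
  assert (HAk : 0 < Apair y ^ k) by now apply pow_lt.
  assert (HE : 0 < exp (INR k * (tilted_mean y - eps) * ln y)) by apply exp_pos.
  assert (Hhalf : Apair y ^ k / 2 <= T * exp (INR k * (tilted_mean y - eps) * ln y)).
  { apply Rle_trans with (Apair y ^ k * (1 - INR s ^ 2 / (eps ^ 2 * INR k))); [|exact Hsm].
    apply Rmult_le_compat_l; lra. }
  assert (HT : 0 < T) by (destruct (Rle_lt_dec T 0); [nra | assumption]).
  apply log2_le in Hhalf; [|lra].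
  rewrite log2_div, log2_pow, log2_2, log2_mult, log2_exp_mult_ln in Hhalf by lra.
  lra.
Qed.

Lemma Tseq_ge_eventually delta y eps :
  (1 <= m)%nat -> 0 <= delta -> 0 < y <= 1 -> 0 < eps ->
  tilted_mean y + 2 * eps <= INR s * delta ->
  exists K, forall k, (K <= k)%nat ->
    chernoff_exponent y ((tilted_mean y - eps) / INR s) - / (INR k * INR s) <= Tseq delta k.
Proof.
  intros Hm Hd Hy Heps Hmu.
  assert (Hs : 1 <= INR s) by now apply (le_INR 1).
  destruct (eventually_ge_INR (2 / eps)) as [K1 HK1].
  destruct (eventually_ge_INR (2 * INR s ^ 2 / eps ^ 2)) as [K2 HK2].
  exists (S (K1 + K2)). intros k Hk.
  assert (Hk1 : (1 <= k)%nat) by lia.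
  assert (Hkr : 1 <= INR k) by now apply (le_INR 1).
  assert (Hepsk : 2 <= INR k * eps) by (apply Rle_div_l; [lra | apply HK1; lia]).
  assert (Hsmall : INR s ^ 2 / (eps ^ 2 * INR k) <= / 2).
  { specialize (HK2 k ltac:(lia)). apply Rle_div_l in HK2; [|nra].
    apply Rle_div_l; nra. }
  unfold Tseq. rewrite mult_INR, Tcount_eq. set (n := INR k * INR s).
  assert (Hn : 0 < n) by (unfold n; nra).
  assert (Hdn : 0 <= delta * n) by (apply Rmult_le_pos; lra).
  destruct (nfloor_pred_bounds (delta * n) Hdn) as [_ HD].
  set (D := (Defs.nfloor (delta * n) - 1)%nat) in *.
  assert (HkD : INR k * (tilted_mean y + eps) <= INR D).
  { assert (INR k * (tilted_mean y + 2 * eps) <= delta * n) by (unfold n; nra). nra. }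
  pose proof (log2_ball_pairs_ge y k eps D Hm Hy Heps Hk1 Hsmall HkD) as Hlog.
  unfold chernoff_exponent.
  apply Rle_trans with
    (/ n * (INR k * log2 (Apair y) - 1 - INR k * (tilted_mean y - eps) * log2 y)).
  - right. unfold n. field. lra.
  - apply Rmult_le_compat_l; [left; now apply Rinv_0_lt_compat | exact Hlog].
Qed.

Lemma Ttilde_eq_chernoff delta y0 : (1 <= m)%nat -> 0 <= delta -> 0 < y0 <= 1 ->
  (forall eta, 0 < eta -> exists y eps, 0 < y <= 1 /\ 0 < eps /\
     tilted_mean y + 2 * eps <= INR s * delta /\
     chernoff_exponent y0 delta - eta < chernoff_exponent y ((tilted_mean y - eps) / INR s)) ->
  Ttilde m s L delta = Finite (chernoff_exponent y0 delta).
Proof.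
  intros Hm Hd Hy0 Hlow.
  change (LimSup_seq (Tseq delta) = Finite (chernoff_exponent y0 delta)).
  apply is_LimSup_seq_unique. intros eta. pose proof (cond_pos eta) as Heta. split.
  - intros N. destruct (Hlow (eta / 2)) as [y [eps [Hy [Heps [Hmu Hlt]]]]]; [lra|].
    destruct (Tseq_ge_eventually delta y eps Hm Hd Hy Heps Hmu) as [K HK].
    destruct (eventually_ge_INR (2 / eta)) as [K' HK'].
    exists (S (N + K + K')). split; [lia|].
    specialize (HK (S (N + K + K')) ltac:(lia)). specialize (HK' (S (N + K + K')) ltac:(lia)).
    assert (Hs : 1 <= INR s) by now apply (le_INR 1).
    assert (/ (INR (S (N + K + K')) * INR s) <= eta / 2).
    { replace (eta / 2) with (/ (2 / eta)) by (field; lra).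
      pose proof (pos_INR (S (N + K + K'))).
      apply Rinv_le_contravar; [apply Rdiv_lt_0_compat; lra | nra]. }
    lra.
  - exists 1%nat. intros k Hk. pose proof (Tseq_le_chernoff delta y0 k Hm Hk Hd Hy0). lra.
Qed.

Lemma R_GV_eq delta c t : Cap m s L = Finite c -> Ttilde m s L delta = Finite t ->
  R_GV m s L delta = Finite (2 * c - t).
Proof. intros Hc Ht. unfold R_GV. rewrite Hc, Ht. cbn. f_equal; ring. Qed.

Lemma Cap_eq : (1 <= m)%nat -> Cap m s L = Finite (log2 (INR m) / INR s).
Proof.
  intros Hm. unfold Cap. apply LimSup_seq_eventually_const. intros k Hk.
  assert (0 < INR m) by (apply lt_0_INR; lia).
  assert (0 < INR k) by (apply lt_0_INR; lia).
  assert (0 < INR s) by (apply lt_0_INR; lia).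
  rewrite length_words, log2_pow, mult_INR by assumption. field. lra.
Qed.

Lemma Bpair_0 : Bpair 0 = 0.
Proof.
  unfold Bpair. rewrite (lsum_ext _ (fun _ => 0)), lsum_const; [ring|].
  intros [|t] _; cbn; ring.
Qed.

Lemma tilted_mean_0 : tilted_mean 0 = 0.
Proof. unfold tilted_mean, Rdiv. rewrite Bpair_0. ring. Qed.

Lemma Ttilde_0 : (1 <= m)%nat -> Ttilde m s L 0 = Finite (chernoff_exponent 0 0).
Proof.
  intros Hm. unfold Ttilde. apply LimSup_seq_eventually_const. intros k Hk.
  rewrite Rmult_0_l, nfloor_0, Tcount_eq.
  rewrite (lsum_ext _ (pow 0)) by (intros [|d] _; cbn; ring).
  assert (HA : 0 < Apair 0) by (pose proof (Apair_ge_1 0 Hm (Rle_refl 0)); lra).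
  assert (0 < INR k) by (apply lt_0_INR; lia).
  assert (0 < INR s) by (apply lt_0_INR; lia).
  rewrite lsum_path_dists_pow, log2_pow, mult_INR by exact HA.
  unfold chernoff_exponent. field. lra.
Qed.

Lemma chernoff_exponent_1 delta :
  (1 <= m)%nat -> chernoff_exponent 1 delta = 2 * (log2 (INR m) / INR s).
Proof.
  intros Hm. assert (0 < INR m) by (apply lt_0_INR; lia).
  assert (0 < INR s) by (apply lt_0_INR; lia).
  unfold chernoff_exponent. rewrite Apair_1, log2_mult, log2_1 by assumption. field. lra.
Qed.

Lemma Ttilde_above_tilted_mean_1 delta : (1 <= m)%nat -> tilted_mean 1 / INR s < delta ->
  Ttilde m s L delta = Finite (chernoff_exponent 1 delta).
Proof.
  intros Hm Hd. assert (Hs : 0 < INR s) by (apply lt_0_INR; lia).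
  pose proof (tilted_mean_bounds 1 ltac:(lra)) as [Hmu _].
  apply Rlt_div_l in Hd; [|lra].
  apply Ttilde_eq_chernoff; [exact Hm | nra | lra |].
  intros eta Heta. exists 1, ((delta * INR s - tilted_mean 1) / 2).
  unfold chernoff_exponent. rewrite log2_1. repeat split; lra.
Qed.

Lemma tilted_mean_lt y1 y2 : (2 <= m)%nat -> 0 <= y1 < y2 -> tilted_mean y1 < tilted_mean y2.
Proof.
  intros Hm Hy. unfold tilted_mean.
  assert (HA1 : 1 <= Apair y1) by (apply Apair_ge_1; [lia | lra]).
  assert (HA2 : 1 <= Apair y2) by (apply Apair_ge_1; [lia | lra]).
  apply (Rmult_lt_reg_r (Apair y1 * Apair y2)); [nra|].
  replace (Bpair y1 / Apair y1 * (Apair y1 * Apair y2)) with (Bpair y1 * Apair y2)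
    by (field; lra).
  replace (Bpair y2 / Apair y2 * (Apair y1 * Apair y2)) with (Bpair y2 * Apair y1)
    by (field; lra).
  assert (Hin : forall e f, (e < m)%nat -> (f < m)%nat -> In (hamming (L e) (L f)) edge_dists).
  { intros e f He Hf. apply (in_map (fun p => hamming (L (fst p)) (L (snd p))) _ (e, f)).
    apply in_prod; apply in_seq; lia. }
  apply weighted_mean_lt; [exact Hy | |].
  - rewrite <- (hamming_refl (L 0)). apply Hin; lia.
  - exists (hamming (L 0) (L 1)). split; [apply Hin; lia|].
    destruct (hamming (L 0) (L 1)) eqn:E; [|lia]. exfalso.
    apply hamming_eq0 in E; [|rewrite !hlen by lia; reflexivity].
    apply hinj in E; lia.
Qed.

Lemma continuous_Apair x : continuous Apair x.
Proof.
  apply (continuous_lsum (fun t y => y ^ t)). intros t _.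
  apply (ex_derive_continuous (fun y => y ^ t)). auto_derive. exact I.
Qed.

Lemma continuous_Bpair x : continuous Bpair x.
Proof.
  apply (continuous_lsum (fun t y => INR t * y ^ t)). intros t _.
  apply (ex_derive_continuous (fun y => INR t * y ^ t)). auto_derive. exact I.
Qed.

Lemma continuous_tilted_mean x : (1 <= m)%nat -> 0 <= x -> continuous tilted_mean x.
Proof.
  intros Hm Hx. apply (continuous_mult Bpair (fun y => / Apair y)); [apply continuous_Bpair|].
  apply (continuous_Rinv_comp Apair); [apply continuous_Apair|].
  pose proof (Apair_ge_1 x Hm Hx). lra.
Qed.

Definition Ttilde_curve (y : R) : R := chernoff_exponent y (tilted_mean y / INR s).

Lemma continuous_Ttilde_curve x : (1 <= m)%nat -> 0 < x -> continuous Ttilde_curve x.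
Proof.
  intros Hm Hx. assert (HA : 0 < Apair x) by (pose proof (Apair_ge_1 x Hm ltac:(lra)); lra).
  unfold Ttilde_curve, chernoff_exponent, log2.
  apply (continuous_minus (fun y => ln (Apair y) / ln 2 / INR s)
                          (fun y => tilted_mean y / INR s * (ln y / ln 2))).
  - apply (continuous_mult (fun y => ln (Apair y) / ln 2) (fun _ => / INR s));
      [|apply continuous_const].
    apply (continuous_mult (fun y => ln (Apair y)) (fun _ => / ln 2)); [|apply continuous_const].
    apply (continuous_comp Apair ln); [apply continuous_Apair | now apply continuous_ln].
  - apply (continuous_mult (fun y => tilted_mean y / INR s) (fun y => ln y / ln 2)).
    + apply (continuous_mult tilted_mean (fun _ => / INR s)); [|apply continuous_const].
      apply continuous_tilted_mean; [exact Hm | lra].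
    + apply (continuous_mult ln (fun _ => / ln 2)); [now apply continuous_ln|].
      apply continuous_const.
Qed.

(* Approaching [y0] from the left keeps the tilted mean strictly below [s * delta],
   leaving room for the slack [eps] that the second-moment bound needs. *)
Lemma Ttilde_curve_eq_pos y0 : (2 <= m)%nat -> 0 < y0 <= 1 ->
  Ttilde m s L (tilted_mean y0 / INR s) = Finite (Ttilde_curve y0).
Proof.
  intros Hm Hy0. assert (Hm1 : (1 <= m)%nat) by lia.
  assert (Hs : 0 < INR s) by (apply lt_0_INR; lia).
  pose proof (tilted_mean_bounds y0 ltac:(lra)) as [Hmu0 _].
  apply Ttilde_eq_chernoff; [exact Hm1 | apply Rdiv_le_0_compat; lra | exact Hy0 |].
  intros eta Heta.
  destruct (continuous_approx_left Ttilde_curve y0 (eta / 2)) as [y [Hy Hclose]];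
    [now apply continuous_Ttilde_curve | lra | lra |].
  apply Rabs_def2 in Hclose as [_ Hclose].
  pose proof (tilted_mean_lt y y0 Hm ltac:(lra)) as Hlt.
  set (lam := - log2 y).
  assert (Hlam : 0 <= lam) by (unfold lam; pose proof (log2_nonpos y ltac:(lra)); lra).
  set (eps := Rmin ((tilted_mean y0 - tilted_mean y) / 2) (eta * INR s / (2 * (1 + lam)))).
  assert (Heps1 : eps <= (tilted_mean y0 - tilted_mean y) / 2) by apply Rmin_l.
  assert (Heps2 : eps <= eta * INR s / (2 * (1 + lam))) by apply Rmin_r.
  assert (Heps : 0 < eps) by (apply Rmin_glb_lt; apply Rdiv_lt_0_compat; nra).
  assert (Hshift : chernoff_exponent y ((tilted_mean y - eps) / INR s) =
                   Ttilde_curve y - eps * lam / INR s)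
    by (unfold Ttilde_curve, chernoff_exponent, lam; field; lra).
  assert (Hloss : eps * lam / INR s <= eta / 2).
  { apply Rle_div_l; [lra|].
    apply Rle_trans with (eta * INR s / (2 * (1 + lam)) * lam); [apply Rmult_le_compat_r; lra|].
    assert (Hq : lam / (1 + lam) <= 1) by (apply Rle_div_l; lra).
    replace (eta * INR s / (2 * (1 + lam)) * lam) with (eta / 2 * INR s * (lam / (1 + lam)))
      by (field; lra).
    assert (0 <= eta / 2 * INR s) by nra. nra. }
  exists y, eps. split; [lra|]. split; [exact Heps|]. split.
  - replace (INR s * (tilted_mean y0 / INR s)) with (tilted_mean y0) by (field; lra). lra.
  - rewrite Hshift. change (chernoff_exponent y0 (tilted_mean y0 / INR s))
      with (Ttilde_curve y0). lra.
Qed.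

Lemma single_edge_degenerate y : m = 1%nat -> tilted_mean y = 0 /\ Ttilde_curve y = 0.
Proof.
  intros Hm1.
  assert (Hdists : edge_dists = [0%nat]).
  { unfold edge_dists, pair_dists. rewrite Hm1. cbn. now rewrite hamming_refl. }
  assert (HA : Apair y = 1) by (unfold Apair; rewrite Hdists; cbn; ring).
  assert (HB : Bpair y = 0) by (unfold Bpair; rewrite Hdists; cbn; ring).
  assert (Hmu : tilted_mean y = 0) by (unfold tilted_mean; rewrite HA, HB; field).
  split; [exact Hmu|].
  unfold Ttilde_curve, chernoff_exponent. rewrite Hmu, HA, log2_1. unfold Rdiv; ring.
Qed.

Lemma Ttilde_curve_eq y : (1 <= m)%nat -> 0 <= y <= 1 ->
  Ttilde m s L (tilted_mean y / INR s) = Finite (Ttilde_curve y).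
Proof.
  intros Hm Hy.
  assert (H0 : Ttilde m s L (tilted_mean 0 / INR s) = Finite (Ttilde_curve 0)).
  { unfold Ttilde_curve. rewrite tilted_mean_0.
    replace (0 / INR s) with 0 by (unfold Rdiv; ring). now apply Ttilde_0. }
  destruct (Req_dec y 0) as [-> | Hy0]; [exact H0|].
  destruct (Nat.eq_dec m 1) as [Hm1 | Hm2].
  - destruct (single_edge_degenerate y Hm1) as [-> ->].
    destruct (single_edge_degenerate 0 Hm1) as [H1 H2]. now rewrite H1, H2 in H0.
  - apply Ttilde_curve_eq_pos; [lia | lra].
Qed.

Lemma R_GV_no_edges delta : m = 0%nat -> R_GV m s L delta = Finite 0.
Proof.
  intros Hm0.
  assert (HC : Cap m s L = Finite 0).
  { unfold Cap. apply LimSup_seq_eventually_const. intros k Hk.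
    rewrite length_words, Hm0, INR_0, pow_i, log2_of_nonpos by (lia || lra). ring. }
  assert (HT : Ttilde m s L delta = Finite 0).
  { unfold Ttilde. apply LimSup_seq_eventually_const. intros k Hk.
    rewrite Tcount_eq. unfold path_dists. rewrite Hm0.
    destruct k as [|k]; [lia|]. cbn [paths seq flat_map].
    rewrite log2_of_nonpos by (cbn; lra). ring. }
  rewrite (R_GV_eq delta 0 0 HC HT). f_equal; ring.
Qed.

Lemma delta_y_eq y : delta_y m s L y = tilted_mean y / INR s.
Proof.
  unfold delta_y, tilted_mean. rewrite Apoly_eq, Bpoly_eq. unfold Rdiv. rewrite Rinv_mult. ring.
Qed.

Lemma delta_max_eq : delta_max m s L = tilted_mean 1 / INR s.
Proof.
  unfold delta_max, tilted_mean, Bpair. rewrite Apair_1, <- lsum_alpha, mult_INR.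
  rewrite (lsum_ext _ (fun t => INR t * INR (alpha m L t))) by (intros; rewrite pow1; ring).
  unfold Rdiv. rewrite !Rinv_mult. unfold lsum. ring.
Qed.

Lemma rho_y_eq y : (1 <= m)%nat -> 0 <= y ->
  rho_y m s L y = 2 * (log2 (INR m) / INR s) - Ttilde_curve y.
Proof.
  intros Hm Hy. assert (0 < INR m) by (apply lt_0_INR; lia).
  assert (0 < INR s) by (apply lt_0_INR; lia).
  assert (HA : 0 < Apair y) by (pose proof (Apair_ge_1 y Hm Hy); lra).
  unfold rho_y, Ttilde_curve, chernoff_exponent, tilted_mean.
  rewrite Apoly_eq, Bpoly_eq, mult_INR, log2_div, log2_mult by nra. field. lra.
Qed.

Lemma delta_y_bounds y : 0 <= y <= 1 -> 0 <= delta_y m s L y <= 1.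
Proof.
  intros Hy. rewrite delta_y_eq.
  assert (Hs : 0 < INR s) by (apply lt_0_INR; lia).
  pose proof (tilted_mean_bounds y ltac:(lra)) as Hmu.
  split; [apply Rdiv_le_0_compat; lra | apply Rle_div_l; lra].
Qed.

Lemma R_GV_delta_y y : 0 <= y <= 1 -> R_GV m s L (delta_y m s L y) = Finite (rho_y m s L y).
Proof.
  intros Hy. destruct (Nat.eq_dec m 0) as [Hm0 | Hm].
  - rewrite R_GV_no_edges by exact Hm0. f_equal.
    assert (HB : Bpair y = 0) by (unfold Bpair, edge_dists, pair_dists; rewrite Hm0; reflexivity).
    unfold rho_y. rewrite Bpoly_eq, HB, Hm0, log2_of_nonpos by (cbn; lra). unfold Rdiv; ring.
  - assert (Hm1 : (1 <= m)%nat) by lia.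
    rewrite delta_y_eq, (R_GV_eq _ _ _ (Cap_eq Hm1) (Ttilde_curve_eq y Hm1 Hy)), rho_y_eq
      by (lia || lra).
    reflexivity.
Qed.

Lemma R_GV_above_delta_max delta : delta_max m s L <= delta -> R_GV m s L delta = Finite 0.
Proof.
  intros Hd. destruct (Nat.eq_dec m 0) as [Hm0 | Hm]; [now apply R_GV_no_edges|].
  assert (Hm1 : (1 <= m)%nat) by lia.
  rewrite delta_max_eq in Hd. destruct Hd as [Hlt | <-].
  - rewrite (R_GV_eq _ _ _ (Cap_eq Hm1) (Ttilde_above_tilted_mean_1 delta Hm1 Hlt)).
    rewrite chernoff_exponent_1 by exact Hm1. f_equal; ring.
  - rewrite <- delta_y_eq, R_GV_delta_y, rho_y_eq by (lia || lra).
    unfold Ttilde_curve. rewrite chernoff_exponent_1 by exact Hm1. f_equal; ring.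
Qed.

Lemma delta_max_nonneg : 0 <= delta_max m s L.
Proof.
  rewrite delta_max_eq, <- delta_y_eq. apply (delta_y_bounds 1). lra.
Qed.

Lemma delta_y_onto delta : 0 <= delta <= delta_max m s L ->
  exists y, 0 <= y <= 1 /\ delta_y m s L y = delta.
Proof.
  intros Hd. rewrite delta_max_eq in Hd.
  assert (Hs : 0 < INR s) by (apply lt_0_INR; lia).
  destruct (Req_dec delta 0) as [-> | Hd0].
  { exists 0. split; [lra|]. rewrite delta_y_eq, tilted_mean_0. unfold Rdiv; ring. }
  destruct (Req_dec delta (tilted_mean 1 / INR s)) as [-> | Hd1].
  { exists 1. split; [lra | apply delta_y_eq]. }
  assert (Hm : (1 <= m)%nat).
  { destruct (Nat.eq_dec m 0) as [Hm0 | Hm]; [exfalso | lia].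
    assert (HB : Bpair 1 = 0) by (unfold Bpair, edge_dists, pair_dists; rewrite Hm0; reflexivity).
    unfold tilted_mean in Hd. rewrite HB in Hd. unfold Rdiv in Hd. lra. }
  destruct (IVT_interv (fun y => tilted_mean y / INR s - delta) 0 1) as [y [Hy Hy0]].
  - intros a Ha. apply continuity_pt_filterlim.
    apply (continuous_minus (fun y => tilted_mean y / INR s) (fun _ => delta));
      [|apply continuous_const].
    apply (continuous_mult tilted_mean (fun _ => / INR s)); [|apply continuous_const].
    apply continuous_tilted_mean; [exact Hm | lra].
  - lra.
  - rewrite tilted_mean_0. unfold Rdiv. lra.
  - lra.
  - exists y. split; [exact Hy|]. rewrite delta_y_eq. lra.
Qed.

End SingleStateGraph.

Theorem corollary2 (m s : nat) (L : nat -> list bool)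
  (hs : (1 <= s)%nat)
  (hlen : forall e, (e < m)%nat -> length (L e) = s)
  (hinj : forall e f, (e < m)%nat -> (f < m)%nat -> L e = L f -> e = f) :
  forall (delta : R) (r : Rbar),
    ((0 <= delta <= 1 /\ R_GV m s L delta = r) <->
     ((exists y : R, 0 <= y <= 1 /\ delta = delta_y m s L y
                     /\ r = Finite (rho_y m s L y))
      \/ (delta_max m s L <= delta <= 1 /\ r = Finite 0))).
Proof.
  intros delta r. split.
  - intros [Hd <-].
    destruct (Rle_lt_dec (delta_max m s L) delta) as [Hmax | Hmax].
    + right. split; [lra|]. now apply (R_GV_above_delta_max m s L hlen hinj hs).
    + left. destruct (delta_y_onto m s L hlen hs delta) as [y [Hy <-]]; [lra|].
      exists y. split; [exact Hy|]. split; [reflexivity|].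
      now apply (R_GV_delta_y m s L hlen hinj hs).
  - intros [[y [Hy [-> ->]]] | [Hd ->]].
    + split; [now apply (delta_y_bounds m s L hlen hs)|].
      now apply (R_GV_delta_y m s L hlen hinj hs).
    + pose proof (delta_max_nonneg m s L hlen hs).
      split; [lra|]. now apply (R_GV_above_delta_max m s L hlen hinj hs).
Qed.
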